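(* Let ${\rm F}_5\subset\mathbb{P}^3(\mathbb{C})$ be the Fermat quintic $x^5-y^5-z^5+w^5=0$. The maximal number of pairwise disjoint lines contained in ${\rm F}_5$ is $13$. *)

From mathcomp Require Import all_boot all_algebra.
From mathcomp Require Import complex.
From mathcomp Require Import reals Rstruct.
Set Implicit Arguments. Unset Strict Implicit. Unset Printing Implicit Defensive.
Import GRing.Theory.
Local Open Scope ring_scope.

Definition C : numClosedFieldType := (Rdefinitions.R)[i].

Definition cx (v : 'rV[C]_4) : C := v ord0 (@Ordinal 4 0 isT).
Definition cy (v : 'rV[C]_4) : C := v ord0 (@Ordinal 4 1 isT).
Definition cz (v : 'rV[C]_4) : C := v ord0 (@Ordinal 4 2 isT).
Definition cw (v : 'rV[C]_4) : C := v ord0 (@Ordinal 4 3 isT).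

Definition fermat5 (v : 'rV[C]_4) : C :=
  cx v ^+ 5 - cy v ^+ 5 - cz v ^+ 5 + cw v ^+ 5.

(* A line of P^3(C) is a 2-dimensional linear subspace of C^4. *)
Definition is_line (L : {vspace 'rV[C]_4}) : Prop := \dim L = 2%N.

Definition line_on_F5 (L : {vspace 'rV[C]_4}) : Prop :=
  is_line L /\ forall v, v \in L -> fermat5 v = 0.

(* Two lines of P^3 are disjoint iff the corresponding planes of C^4
   meet only in 0. *)
Definition disjoint_lines (L1 L2 : {vspace 'rV[C]_4}) : Prop :=
  (L1 :&: L2)%VS = 0%VS.

Definition disjoint_family_on_F5 (s : seq {vspace 'rV[C]_4}) : Prop :=
  [/\ uniq s, (forall L, L \in s -> line_on_F5 L) &
      (forall L1 L2, L1 \in s -> L2 \in s -> L1 != L2 -> disjoint_lines L1 L2)].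

(* Every line on the Fermat quintic is one of 75 explicit lines.  Parametrise
   a line L by two coordinates p, q on which it projects isomorphically, so the
   remaining coordinates are linear forms a + b t, c + d t; comparing the
   coefficients of t^0, ..., t^5 in the vanishing quintic forces a = d = 0 or
   b = c = 0.  Hence L is cut out by relations x_j = rho x_i, x_l = sigma x_k
   for a matching {i j}, {k l} of the four coordinates, with rho^5 = +-1 and
   sigma^5 = +-1.  Encoding the matching and the exponents of a primitive fifth
   root of unity as a key (t, i, j), two such lines meet exactly when their
   keys satisfy an explicit congruence mod 5, so a family of disjoint lines is
   an independent set in a graph on 75 vertices.  An exhaustive branch and
   bound search bounds these sets by 13, and an explicit one has size 13. *)

From mathcomp Require Import all_boot all_algebra.
From mathcomp Require Import complex.
From mathcomp Require Import reals Rstruct.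
From mathcomp Require Import ring zify.

Set Implicit Arguments. Unset Strict Implicit. Unset Printing Implicit Defensive.
Import GRing.Theory Num.Theory.

Section IndependentSets.

Variables (T B : eqType) (adj : rel T) (block : T -> B).
Hypothesis adj_block : forall a b, block a = block b -> adj a b.

Definition indep (X : seq T) :=
  forall x y, x \in X -> y \in X -> x != y -> ~~ adj x y.

Definition indepb (X : seq T) :=
  all (fun x => all (fun y => (x == y) || ~~ adj x y) X) X.

Lemma indepP X : reflect (indep X) (indepb X).
Proof.
apply: (iffP allP) => [iX x y xX yX xy | iX x xX]; last first.
  by apply/allP => y yX; case: eqP => [//|/eqP xy]; exact: iX.
by have /allP /(_ y yX) := iX x xX; rewrite (negbTE xy).
Qed.

Lemma indep_sub X Y : {subset X <= Y} -> indep Y -> indep X.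
Proof. by move=> sXY iY x y xX yX; apply: iY; apply: sXY. Qed.

Definition nblocks (c : seq T) := size (undup (map block c)).

Lemma indep_size_le_nblocks X c :
  uniq X -> {subset X <= c} -> indep X -> size X <= nblocks c.
Proof.
move=> uX sXc iX; rewrite -(size_map block); apply: uniq_leq_size.
  rewrite map_inj_in_uniq // => x y xX yX bxy; apply/eqP/negPn/negP => nxy.
  by move: (iX x y xX yX nxy); rewrite adj_block.
by move=> _ /mapP [x xX ->]; rewrite mem_undup map_f ?sXc.
Qed.

(* The boolean tests are written with [if] rather than [&&] and [||]
   so that [vm_compute] evaluates them lazily. *)
Fixpoint has_indep (fuel : nat) (c : seq T) (k : nat) : bool :=
  if k is k'.+1 then
    if fuel is fuel'.+1 then
      if c is v :: rest then
        if k <= nblocks c then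
          if has_indep fuel' [seq w <- rest | ~~ adj v w] k' then true
          else has_indep fuel' rest k
        else false
      else false
    else false
  else true.

Lemma has_indepN_size_lt fuel c k : size c <= fuel -> ~~ has_indep fuel c k ->
  forall X, uniq X -> {subset X <= c} -> indep X -> size X < k.
Proof.
elim: fuel c k => [|fuel IH] [|v rest] [|k] //= szc.
- by move=> _ [|x X] // _ /(_ x); rewrite mem_head => /(_ isT).
- by move=> _ [|x X] // _ /(_ x); rewrite mem_head => /(_ isT).
case: (leqP k.+1 (nblocks (v :: rest))) => [_|lt_c _ X uX sX iX]; last first.
  exact: leq_trans (indep_size_le_nblocks uX sX iX) lt_c.
case: ifP => // /negbT nv nr X uX sX iX.
have [vX|vX] := boolP (v \in X); last first.
  have sXr : {subset X <= rest}.
    by move=> x xX; move: (sX x xX) vX; rewrite inE => /orP [/eqP <-|] //; rewrite xX.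
  exact: (IH rest k.+1 szc nr X uX sXr iX).
rewrite (perm_size (perm_to_rem vX)) /= ltnS.
apply: (IH _ _ _ nv); rewrite ?rem_uniq //.
- by rewrite size_filter (leq_trans (count_size _ _)).
- move=> x xr; have xX := mem_rem xr.
  have xv : x != v by move: xr; rewrite (rem_filter _ uX) mem_filter => /andP [].
  rewrite mem_filter (iX v x vX xX) 1?eq_sym //=.
  by move: (sX x xX); rewrite inE (negbTE xv).
- by apply: indep_sub iX => x; apply: mem_rem.
Qed.

End IndependentSets.

Local Open Scope ring_scope.

Lemma poly_fun_coef_eq0 (R : numDomainType) n (c : nat -> R) :
  (forall t, \sum_(i < n) c i * t ^+ i = 0) -> forall i, (i < n)%N -> c i = 0.
Proof.
move=> c0 i lt_in; pose p : {poly R} := \poly_(i < n) c i.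
have p0 : p = 0.
  apply: (@roots_geq_poly_eq0 _ _ [seq m%:R | m <- iota 0 n]).
  - by apply/allP => t _; apply/rootP; rewrite horner_poly c0.
  - by rewrite map_inj_uniq ?iota_uniq // => m m' /eqP; rewrite eqr_nat => /eqP.
  - by rewrite size_map size_iota size_poly.
by have := coef_poly n c i; rewrite lt_in -/p p0 coef0.
Qed.

Section FourFifthPowers.

Variables (R : numDomainType) (e1 e2 e3 e4 a b c d : R).
Hypotheses (e1_neq0 : e1 != 0) (e2_neq0 : e2 != 0) (e3_neq0 : e3 != 0) (e4_neq0 : e4 != 0).
Hypothesis quintic_eq0 :
  forall t, e1 + e2 * t ^+ 5 + e3 * (a + b * t) ^+ 5 + e4 * (c + d * t) ^+ 5 = 0.

Let coefs_eq0 :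
  [/\ e1 + e3 * a ^+ 5 + e4 * c ^+ 5 = 0, e3 * a ^+ 4 * b + e4 * c ^+ 4 * d = 0,
      e3 * a ^+ 3 * b ^+ 2 + e4 * c ^+ 3 * d ^+ 2 = 0, e3 * a * b ^+ 4 + e4 * c * d ^+ 4 = 0
    & e2 + e3 * b ^+ 5 + e4 * d ^+ 5 = 0].
Proof.
pose C i := nth 0 [:: e1 + e3 * a ^+ 5 + e4 * c ^+ 5;
  5%:R * (e3 * a ^+ 4 * b + e4 * c ^+ 4 * d); 10%:R * (e3 * a ^+ 3 * b ^+ 2 + e4 * c ^+ 3 * d ^+ 2);
  10%:R * (e3 * a ^+ 2 * b ^+ 3 + e4 * c ^+ 2 * d ^+ 3); 5%:R * (e3 * a * b ^+ 4 + e4 * c * d ^+ 4);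
  e2 + e3 * b ^+ 5 + e4 * d ^+ 5] i.
have C0 : forall i, (i < 6)%N -> C i = 0.
  apply: poly_fun_coef_eq0 => t; apply: etrans (quintic_eq0 t).
  by rewrite !big_ord_recr big_ord0 /C /=; ring.
have unscale (n : nat) (x : R) : n%:R * x = 0 -> (0 < n)%N -> x = 0.
  by move=> /eqP; rewrite mulf_eq0 pnatr_eq0 => /orP [/eqP -> | /eqP].
split; [exact: (C0 0%N) | | | | exact: (C0 5%N)].
- exact: unscale (C0 1%N isT) isT.
- exact: unscale (C0 2%N isT) isT.
- exact: unscale (C0 4%N isT) isT.
Qed.

Let mulf0 (x y : R) : x != 0 -> x * y = 0 -> y = 0.
Proof. by move=> x_neq0 /eqP; rewrite mulf_eq0 (negbTE x_neq0) => /eqP. Qed.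

(* If a, b, c, d were all nonzero, the coefficients of t and t^2 would force
   a d = b c, and then the constant coefficient would give e1 = 0. *)
Let ab_eq0 : a = 0 \/ b = 0.
Proof.
have [E0 E1 E2 _ _] := coefs_eq0.
have [a0|a_neq0] := eqVneq a 0; first by left.
have [b0|b_neq0] := eqVneq b 0; first by right.
exfalso.
have c_neq0 : c != 0.
  apply: contra_neq b_neq0 => c0; move: E1; rewrite c0 expr0n /= mulr0 mul0r addr0 -mulrA.
  by move/(mulf0 e3_neq0)/(mulf0 (expf_neq0 4 a_neq0)).
have d_neq0 : d != 0.
  apply: contra_neq b_neq0 => d0; move: E1; rewrite d0 mulr0 addr0 -mulrA.
  by move/(mulf0 e3_neq0)/(mulf0 (expf_neq0 4 a_neq0)).
have adbc : a * d - b * c = 0.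
  have : e3 * (a ^+ 3 * (b * (c ^+ 3 * (d * (a * d - b * c))))) = 0.
    transitivity (c ^+ 3 * d ^+ 2 * (e3 * a ^+ 4 * b + e4 * c ^+ 4 * d)
                  - c ^+ 4 * d * (e3 * a ^+ 3 * b ^+ 2 + e4 * c ^+ 3 * d ^+ 2)); first by ring.
    by rewrite E1 E2 !mulr0 subrr.
  move/(mulf0 e3_neq0)/(mulf0 (expf_neq0 3 a_neq0))/(mulf0 b_neq0).
  by move/(mulf0 (expf_neq0 3 c_neq0))/(mulf0 d_neq0).
have : b * (e3 * a ^+ 5 + e4 * c ^+ 5) = 0.
  transitivity (a * (e3 * a ^+ 4 * b + e4 * c ^+ 4 * d) - e4 * c ^+ 4 * (a * d - b * c)).
    by ring.
  by rewrite E1 adbc !mulr0 subrr.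
move/(mulf0 b_neq0) => E35.
by move/eqP: e1_neq0; apply; rewrite -E0 -addrA E35 addr0.
Qed.

Lemma four_fifth_powers_eq0 :
  (a = 0 /\ d = 0 /\ e1 + e4 * c ^+ 5 = 0 /\ e2 + e3 * b ^+ 5 = 0) \/
  (b = 0 /\ c = 0 /\ e1 + e3 * a ^+ 5 = 0 /\ e2 + e4 * d ^+ 5 = 0).
Proof.
have [E0 E1 _ E4 E5] := coefs_eq0.
case: ab_eq0 => [a0|b0]; [left | right].
  have c_neq0 : c != 0 by apply: contra_neq e1_neq0 => c0; rewrite -E0 a0 c0; ring.
  have d0 : d = 0.
    move: E1; rewrite a0 expr0n /= mulr0 mul0r add0r -mulrA.
    by move/(mulf0 e4_neq0)/(mulf0 (expf_neq0 4 c_neq0)).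
  do !split => //; [move: E0; rewrite a0 | move: E5; rewrite d0].
    by rewrite expr0n mulr0 addr0.
  by rewrite expr0n mulr0 addr0.
have d_neq0 : d != 0 by apply: contra_neq e2_neq0 => d0; rewrite -E5 b0 d0; ring.
have c0 : c = 0.
  move: E4; rewrite b0 expr0n /= mulr0 add0r mulrAC -mulrA.
  by move/(mulf0 e4_neq0)/(mulf0 (expf_neq0 4 d_neq0)).
do !split => //; [move: E0; rewrite c0 | move: E5; rewrite b0].
  by rewrite expr0n mulr0 addr0.
by rewrite expr0n mulr0 addr0.
Qed.

End FourFifthPowers.

Lemma eq_mull_eq0 (R : idomainType) (a b x : R) : a != b -> a * x = b * x -> x = 0.
Proof. by move=> ab /eqP; rewrite -subr_eq0 -mulrBl mulf_eq0 subr_eq0 (negbTE ab) => /eqP. Qed.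

Lemma map_uniq_inj_in (T1 T2 : eqType) (f : T1 -> T2) s : uniq (map f s) -> {in s &, injective f}.
Proof.
elim: s => [|a s IH] //= /andP [fa_notin us] x y; rewrite !inE.
case/orP => [/eqP ->|xs] /orP [/eqP ->|ys] // e.
- by move: fa_notin; rewrite e map_f.
- by move: fa_notin; rewrite -e map_f.
- exact: IH.
Qed.

Lemma vlineZ (K : fieldType) (vT : vectType K) (a : K) (v : vT) :
  a != 0 -> (<[a *: v]> = <[v]>)%VS.
Proof.
move=> a_neq0; apply/vspaceP => w; apply/vlineP/vlineP => [[x ->] | [x ->]].
  by exists (x * a); rewrite scalerA.
by exists (x / a); rewrite scalerA divfK.
Qed.

Lemma disjoint_linesP (L1 L2 : {vspace 'rV[C]_4}) :
  disjoint_lines L1 L2 <-> (forall w, w \in L1 -> w \in L2 -> w = 0).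
Proof.
split => [disj w w1 w2 | disj].
  have : w \in (L1 :&: L2)%VS by apply/memv_capP.
  by rewrite disj memv0 => /eqP.
apply/eqP; rewrite -subv0; apply/subvP => w /memv_capP [w1 w2].
by rewrite memv0 (disj w w1 w2).
Qed.

Lemma prim5_root_exists : {z : C | 5.-primitive_root z}.
Proof.
apply: sigW; pose Phi : {poly C} := 'X^4 + 'X^3 + 'X^2 + 'X + 1.
have XPhi : ('X - 1) * Phi = 'X^5 - 1 by rewrite /Phi; ring.
have Phi_neq0 : Phi != 0.
  apply/eqP => Phi0; have := size_XnsubC (1 : C) (isT : (0 < 5)%N).
  by rewrite -XPhi Phi0 mulr0 size_poly0.
have sizePhi : size Phi = 5%N.
  have := size_XnsubC (1 : C) (isT : (0 < 5)%N).
  by rewrite -XPhi size_mul ?polyXsubC_eq0 // size_XsubC => -[].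
have [z /rootP Phiz] : exists z, root Phi z by apply/closed_rootP; rewrite sizePhi.
have z5 : z ^+ 5 = 1.
  apply/eqP; rewrite -subr_eq0; have := congr1 (horner^~ z) XPhi.
  by rewrite /= hornerM Phiz mulr0 !hornerE => <-.
have z_neq1 : z != 1.
  apply/eqP => z1; move: Phiz; rewrite z1 /Phi !hornerE !expr1n => /eqP.
  by rewrite (_ : _ + 1 = 5%:R) ?pnatr_eq0 //; ring.
have [m prim_m m_dvd5] := prim_order_exists (isT : (0 < 5)%N) z5.
have [m1|/(prime_nt_dvdP (isT : prime 5))/(_ m_dvd5) m5] := eqVneq m 1%N.
  by move: z_neq1; rewrite -[z]expr1 -m1 prim_expr_order ?eqxx.
by exists z; rewrite -m5.
Qed.

Definition zeta : C := sval prim5_root_exists.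

Lemma zeta_prim : 5.-primitive_root zeta.
Proof. exact: svalP prim5_root_exists. Qed.

Lemma zetaX5 a : (zeta ^+ a) ^+ 5 = 1.
Proof. by rewrite -exprM mulnC exprM (prim_expr_order zeta_prim) expr1n. Qed.

Lemma zetaX_neq0 a : zeta ^+ a != 0.
Proof. by rewrite expf_neq0 // (prim_root_eq0 zeta_prim). Qed.

Lemma root5_unity (x : C) : x ^+ 5 = 1 -> {a : 'I_5 | x = zeta ^+ a}.
Proof. exact: (prim_rootP zeta_prim). Qed.

Notation ord4 n := (@Ordinal 4 n isT).

Definition hcoord (m : 'I_4) (v : 'rV[C]_4) : C := v ord0 m.

Lemma hcoord_comb m x y u v : hcoord m (x *: u + y *: v) = x * hcoord m u + y * hcoord m v.
Proof. by rewrite /hcoord !mxE. Qed.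

Lemma hcoordZ m a u : hcoord m (a *: u) = a * hcoord m u.
Proof. by rewrite /hcoord mxE. Qed.

Definition sign5 (m : 'I_4) : C := if (m == 1%N :> nat) || (m == 2%N :> nat) then -1 else 1.

Lemma sign5_sqr m : sign5 m ^+ 2 = 1.
Proof. by rewrite /sign5; case: ifP; rewrite ?sqrrN expr1n. Qed.

Lemma sign5_neq0 m : sign5 m != 0.
Proof. by rewrite /sign5; case: ifP; rewrite ?oppr_eq0 oner_eq0. Qed.

Lemma fermat5E v : fermat5 v = \sum_m sign5 m * hcoord m v ^+ 5.
Proof.
have E (i j : 'I_4) : val i = val j -> v ord0 i = v ord0 j.
  by move/val_inj->.
rewrite /fermat5 !big_ord_recl big_ord0 /sign5 /hcoord /= /cx /cy /cz /cw.
rewrite (E (Ordinal (isT : 0 < 4)%N) ord0 erefl) (E (Ordinal (isT : 1 < 4)%N) (lift ord0 ord0) erefl).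
rewrite (E (Ordinal (isT : 2 < 4)%N) (lift ord0 (lift ord0 ord0)) erefl).
rewrite (E (Ordinal (isT : 3 < 4)%N) (lift ord0 (lift ord0 (lift ord0 ord0))) erefl).
by rewrite !mul1r !mulN1r addr0 !addrA.
Qed.


Lemma dim_sum_lines (u v : 'rV[C]_4) m :
  hcoord m u != 0 -> hcoord m v = 0 -> v != 0 -> \dim (<[u]> + <[v]>) = 2%N.
Proof.
move=> um vm v_neq0; suff /eqP : free [:: u; v] by rewrite span_cons span_seq1.
rewrite free_cons seq1_free span_seq1 v_neq0 andbT.
by apply: contra um => /vlineP [a ->]; rewrite hcoordZ vm mulr0.
Qed.

Definition pair_line (i j k l : 'I_4) (b c : C) : {vspace 'rV[C]_4} :=
  (<[delta_mx ord0 i + b *: delta_mx ord0 j]> + <[delta_mx ord0 k + c *: delta_mx ord0 l]>)%VS.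

Definition fermat_pair (i j : 'I_4) (b : C) := sign5 i + sign5 j * b ^+ 5 = 0.

Section PairLine.

Variables i j k l : 'I_4.
Hypothesis ijkl : uniq [:: i; j; k; l].

Lemma mem_uniq4 m : m \in [:: i; j; k; l].
Proof.
have [_ ->] := uniq_min_size ijkl (fun m _ => mem_enum predT m) (eq_leq (size_enum_ord 4)).
exact: mem_enum.
Qed.

Let neqE : ((i == j) = false) * ((i == k) = false) * ((i == l) = false) *
  ((j == k) = false) * ((j == l) = false) * ((k == l) = false) *
  ((j == i) = false) * ((k == i) = false) * ((l == i) = false) *
  ((k == j) = false) * ((l == j) = false) * ((l == k) = false).
Proof.
move: ijkl; rewrite /= !inE !negb_or => /and4P [/and3P [ij ik il] /andP [jk jl] kl _].
by do !split; apply/negbTE; rewrite // eq_sym.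
Qed.

Lemma fermat5_uniq4 v : fermat5 v = sign5 i * hcoord i v ^+ 5 + sign5 j * hcoord j v ^+ 5
  + sign5 k * hcoord k v ^+ 5 + sign5 l * hcoord l v ^+ 5.
Proof.
have perm_ijkl : perm_eq (index_enum 'I_4) [:: i; j; k; l].
  by apply: uniq_perm => //; [exact: index_enum_uniq | move=> m; rewrite mem_index_enum mem_uniq4].
by rewrite fermat5E (perm_big _ perm_ijkl) !big_cons big_nil /= addr0 !addrA.
Qed.

Lemma row4P w w' : hcoord i w = hcoord i w' -> hcoord j w = hcoord j w' ->
  hcoord k w = hcoord k w' -> hcoord l w = hcoord l w' -> w = w'.
Proof.
move=> wi wj wk wl; apply/rowP => m.
by have := mem_uniq4 m; rewrite !inE => /or4P [] /eqP ->.
Qed.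

Let hcoord_gen m n n' d :
  hcoord m (delta_mx ord0 n + d *: delta_mx ord0 n') = (m == n)%:R + d * (m == n')%:R.
Proof. by rewrite /hcoord !mxE. Qed.

Let pair_vec x y b c : 'rV[C]_4 :=
  x *: (delta_mx ord0 i + b *: delta_mx ord0 j) + y *: (delta_mx ord0 k + c *: delta_mx ord0 l).

Let hcoord_pair x y b c (w := pair_vec x y b c) :
  [/\ hcoord i w = x, hcoord j w = b * x, hcoord k w = y & hcoord l w = c * y].
Proof.
rewrite /w /pair_vec; split;
  by rewrite hcoord_comb !hcoord_gen !eqxx !neqE /= !(mulr0n, mulr1n, mulr0, mulr1, addr0, add0r) // mulrC.
Qed.

Lemma pair_lineP b c w :
  reflect (hcoord j w = b * hcoord i w /\ hcoord l w = c * hcoord k w) (w \in pair_line i j k l b c).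
Proof.
apply: (iffP memv_addP) => [[_ /vlineP [x ->] [_ /vlineP [y ->] ->]] | [wj wl]].
  by have [-> -> -> ->] := hcoord_pair x y b c.
exists (hcoord i w *: (delta_mx ord0 i + b *: delta_mx ord0 j)); first by rewrite memvZ ?memv_line.
exists (hcoord k w *: (delta_mx ord0 k + c *: delta_mx ord0 l)); first by rewrite memvZ ?memv_line.
have [wi' wj' wk' wl'] := hcoord_pair (hcoord i w) (hcoord k w) b c.
by apply: row4P; rewrite ?wi' ?wj' ?wk' ?wl' ?wj ?wl.
Qed.

Lemma dim_pair_line b c : \dim (pair_line i j k l b c) = 2%N.
Proof.
apply: (dim_sum_lines (m := i)); rewrite ?hcoord_gen ?eqxx ?neqE /= ?(mulr0n, mulr1n, mulr0, addr0) ?oner_neq0 //.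
apply: contra_neq (@oner_neq0 C) => /(congr1 (hcoord k)).
by rewrite hcoord_gen eqxx !neqE /= ?(mulr0n, mulr1n) !(mulr0, addr0) /hcoord mxE.
Qed.

Lemma pair_line_on_F5 b c :
  fermat_pair i j b -> fermat_pair k l c -> line_on_F5 (pair_line i j k l b c).
Proof.
move=> ijb klc; split; first exact: dim_pair_line.
move=> w /pair_lineP [wj wl]; rewrite fermat5_uniq4 wj wl.
rewrite (_ : _ + _ = (sign5 i + sign5 j * b ^+ 5) * hcoord i w ^+ 5
                   + (sign5 k + sign5 l * c ^+ 5) * hcoord k w ^+ 5); last by ring.
by rewrite ijb klc !mul0r addr0.
Qed.

Lemma pair_lines_disjoint b c b' c' :
  disjoint_lines (pair_line i j k l b c) (pair_line i j k l b' c') <-> (b != b') && (c != c').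
Proof.
rewrite disjoint_linesP; split => [disj | /andP [bb' cc'] w /pair_lineP [wj wl] /pair_lineP [wj' wl']].
  apply/andP; split; apply/eqP => e.
    have [wi wj wk wl] := hcoord_pair 1 0 b c.
    have W0 : pair_vec 1 0 b c = 0 by apply: disj; apply/pair_lineP; rewrite wi wj wk wl -?e !mulr0.
    by move: wi; rewrite W0 /hcoord mxE => /eqP; rewrite eq_sym oner_eq0.
  have [wi wj wk wl] := hcoord_pair 0 1 b c.
  have W0 : pair_vec 0 1 b c = 0 by apply: disj; apply/pair_lineP; rewrite wi wj wk wl -?e !mulr0.
  by move: wk; rewrite W0 /hcoord mxE => /eqP; rewrite eq_sym oner_eq0.
have wi0 : hcoord i w = 0 by apply: eq_mull_eq0 bb' _; rewrite -wj -wj'.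
have wk0 : hcoord k w = 0 by apply: eq_mull_eq0 cc' _; rewrite -wl -wl'.
by apply/row4P; rewrite /hcoord mxE -/(hcoord _ w) ?wj ?wl ?wi0 ?wk0 ?mulr0.
Qed.

End PairLine.

Lemma pair_lineC i j k l b c : pair_line i j k l b c = pair_line k l i j c b.
Proof. exact: addvC. Qed.

Lemma pair_line_flip i j k l b c : b != 0 -> pair_line i j k l b c = pair_line j i k l b^-1 c.
Proof.
move=> b_neq0; rewrite /pair_line.
have -> : delta_mx ord0 j + b^-1 *: delta_mx ord0 i = b^-1 *: (delta_mx ord0 i + b *: delta_mx ord0 j) :> 'rV[C]_4.
  by rewrite scalerDr scalerA (mulVf b_neq0) scale1r addrC.
by rewrite vlineZ ?invr_neq0.
Qed.

Lemma fermat_pair_flip i j b : fermat_pair i j b -> b != 0 /\ fermat_pair j i b^-1.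
Proof.
rewrite /fermat_pair => ijb; have b_neq0 : b != 0.
  by apply: contra_eq_neq ijb => ->; rewrite expr0n mulr0 addr0 sign5_neq0.
split=> //; apply: (mulIf (expf_neq0 5 b_neq0)).
by rewrite mul0r mulrDl exprVn -mulrA mulVf ?expf_neq0 // mulr1 addrC.
Qed.

Definition pair_root (i j : 'I_4) (a : nat) : C := - sign5 i * sign5 j * zeta ^+ a.

Lemma fermat_pair_root i j a : fermat_pair i j (pair_root i j a).
Proof.
rewrite /fermat_pair /pair_root exprMn zetaX5 mulr1.
rewrite (_ : _ + _ = sign5 i * (1 - (sign5 i ^+ 2) ^+ 2 * (sign5 j ^+ 2) ^+ 3)); last by ring.
by rewrite !sign5_sqr !expr1n mulr1 subrr mulr0.
Qed.

Lemma fermat_pairP i j b : fermat_pair i j b -> exists a : 'I_5, b = pair_root i j a.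
Proof.
rewrite /fermat_pair => ijb; set e := - sign5 i * sign5 j.
have e2 : e ^+ 2 = 1 by rewrite /e exprMn sqrrN !sign5_sqr mulr1.
have b5 : b ^+ 5 = e.
  have /eqP : sign5 j * (sign5 i + sign5 j * b ^+ 5) = 0 by rewrite ijb mulr0.
  by rewrite mulrDr mulrA -expr2 sign5_sqr mul1r addrC addr_eq0 => /eqP ->; rewrite /e mulNr mulrC.
have [|a Ha] := root5_unity (x := e * b).
  by rewrite exprMn b5 -exprSr (_ : 6 = 2 * 3)%N // exprM e2 expr1n.
by exists a; rewrite /pair_root -/e -Ha mulrA -expr2 e2 mul1r.
Qed.

Definition key := (nat * nat * nat)%type.

Definition allkeys : seq key :=
  [seq (ti, j) | ti <- [seq (t, i) | t <- iota 0 3, i <- iota 0 5], j <- iota 0 5].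

Lemma mem_allkeys t i j : ((t, i, j) \in allkeys) = [&& t < 3, i < 5 & j < 5]%N.
Proof.
apply/allpairsP/and3P => [[[[t' i'] j'] [+ + [-> -> ->]]]|[ht hi hj]].
  by rewrite mem_iota => /allpairsP [[t'' i''] [+ + [-> ->]]]; rewrite !mem_iota.
exists ((t, i), j); split; rewrite ?mem_iota //.
by apply/allpairsP; exists (t, i); rewrite !mem_iota.
Qed.

Definition key_matching (t : nat) : 'I_4 * 'I_4 * 'I_4 :=
  if t == 0%N then (ord4 1, ord4 2, ord4 3)
  else if t == 1%N then (ord4 2, ord4 1, ord4 3) else (ord4 3, ord4 1, ord4 2).

Definition key_line (a : key) : {vspace 'rV[C]_4} :=
  let: (t, i, j) := a in let: (m, k, l) := key_matching t in
  pair_line (ord4 0) m k l (pair_root (ord4 0) m i) (pair_root k l j).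

Arguments key_line : simpl never.

Lemma uniq_key_matching t :
  let: (m, k, l) := key_matching t in uniq [:: ord4 0; m; k; l].
Proof. by rewrite /key_matching; case: ifP => _; last case: ifP. Qed.

Lemma key_line_on_F5 a : line_on_F5 (key_line a).
Proof.
case: a => [[t i] j]; rewrite /key_line.
case: (key_matching t) (uniq_key_matching t) => [[m k] l] u.
by apply: pair_line_on_F5 => //; apply: fermat_pair_root.
Qed.

Lemma key_matching_of (j k l : 'I_4) :
  uniq [:: ord4 0; j; k; l] -> (k < l)%N -> key_matching j.-1 = (j, k, l).
Proof.
by case: j k l => [[|[|[|[|//]]]] ?] [[|[|[|[|//]]]] ?] [[|[|[|[|//]]]] ?] //= _ _;
  congr (_, _, _); apply: val_inj.
Qed.

Lemma pair_line_key i j k l b c :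
  uniq [:: i; j; k; l] -> fermat_pair i j b -> fermat_pair k l c ->
  exists2 a, a \in allkeys & pair_line i j k l b c = key_line a.
Proof.
wlog -> : i j k l b c / i = ord4 0.
  move=> IH ijkl ijb klc; have [b_neq0 jib] := fermat_pair_flip ijb.
  have [c_neq0 lkc] := fermat_pair_flip klc.
  have := mem_uniq4 ijkl (ord4 0); rewrite !inE => /or4P [] /eqP i0.
  - exact: IH.
  - rewrite pair_line_flip //; apply: (IH j i) => //.
    by rewrite -(uniq_catCA [:: i] [:: j] [:: k; l]).
  - rewrite pair_lineC; apply: (IH k l) => //.
    by rewrite -(uniq_catC [:: i; j] [:: k; l]).
  - rewrite pair_lineC pair_line_flip //; apply: (IH l k) => //.
    rewrite -(uniq_catCA [:: k] [:: l] [:: i; j]).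
    by rewrite -(uniq_catC [:: i; j] [:: k; l]).
wlog kl : k l c / (k < l)%N.
  move=> IH ijkl ijb klc; case: (ltngtP k l) => [kl | lk | /val_inj kl]; first exact: IH.
    have [c_neq0 lkc] := fermat_pair_flip klc.
    rewrite pair_lineC pair_line_flip // pair_lineC; apply: IH => //.
    by rewrite (uniq_catC [:: ord4 0; j; l] [:: k]) (uniq_catCA [:: k] [:: ord4 0; j] [:: l]).
  by move: ijkl; rewrite kl /= !inE eqxx /= !andbF.
move=> ijkl /fermat_pairP [a ->] /fermat_pairP [a' ->].
exists (j.-1, val a, val a'); last by rewrite /key_line (key_matching_of ijkl kl).
by rewrite mem_allkeys !ltn_ord andbT; have := ltn_ord j; lia.
Qed.

Lemma exists_hcoord_neq0 (v : 'rV[C]_4) : v != 0 -> exists m, hcoord m v != 0.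
Proof.
move=> v_neq0; apply/existsP; apply: contraNT v_neq0 => /existsPn v0.
by apply/eqP/rowP => m; rewrite mxE; apply/eqP/negPn/v0.
Qed.

Lemma line_coord_basis L : \dim L = 2%N ->
  exists p q (u v : 'rV[C]_4), [/\ u \in L, v \in L, hcoord p u = 1, hcoord q u = 0
    & [/\ hcoord p v = 0, hcoord q v = 1 & p != q]].
Proof.
move=> dL; have := vbasisP L; have := size_tuple (vbasis L).
case: (vbasis L : seq _) => [|u0 [|v0 [|? ?]]]; rewrite dL // => _ /andP [/eqP spanL].
rewrite free_cons seq1_free span_seq1 => /andP [u0_notin v0_neq0].
have u0L : u0 \in L by rewrite -spanL memv_span ?mem_head.
have v0L : v0 \in L by rewrite -spanL memv_span // !inE eqxx orbT.
have [p v0p] := exists_hcoord_neq0 v0_neq0.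
have [u1 [u1L u1_neq0 u1p]] : exists u1, [/\ u1 \in L, u1 != 0 & hcoord p u1 = 0].
  exists (u0 - (hcoord p u0 / hcoord p v0) *: v0); split.
  - by rewrite memvB ?memvZ.
  - by apply: contra u0_notin; rewrite subr_eq0 => /eqP ->; rewrite memvZ ?memv_line.
  - by rewrite /hcoord !mxE divfK // subrr.
have [q u1q] := exists_hcoord_neq0 u1_neq0.
have [v [vL vp vq]] : exists v, [/\ v \in L, hcoord p v = 0 & hcoord q v = 1].
  by exists ((hcoord q u1)^-1 *: u1); rewrite memvZ // !hcoordZ u1p mulr0 mulVf.
pose a := (hcoord p v0)^-1.
exists p, q, (a *: v0 + (- (a * hcoord q v0)) *: v), v; split=> //.
- by rewrite memvD ?memvZ.
- by rewrite hcoord_comb vp mulr0 addr0 mulVf.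
- by rewrite hcoord_comb vq mulr1 addrN.
by split=> //; apply: contra_neq u1q => <-.
Qed.

Lemma line_coord_decomp L p q (u v : 'rV[C]_4) :
  \dim L = 2%N -> u \in L -> v \in L ->
  hcoord p u = 1 -> hcoord q u = 0 -> hcoord p v = 0 -> hcoord q v = 1 ->
  forall w, w \in L -> w = hcoord p w *: u + hcoord q w *: v.
Proof.
move=> dL uL vL up uq vp vq w.
have v_neq0 : v != 0 by apply: contra_eq_neq vq => ->; rewrite /hcoord mxE eq_sym oner_neq0.
have -> : L = (<[u]> + <[v]>)%VS.
  apply/eqP; rewrite eq_sym eqEdim subv_add -!memvE uL vL dL.
  by rewrite (dim_sum_lines (m := p)) ?up ?oner_neq0.
case/memv_addP => _ /vlineP [x ->] [_ /vlineP [y ->] ->].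
by rewrite !hcoord_comb up uq vp vq !mulr1 !mulr0 addr0 add0r.
Qed.

Lemma exists_uniq4 (p q : 'I_4) : p != q -> exists r s, uniq [:: p; q; r; s].
Proof.
case: p q => [[|[|[|[|//]]]] ?] [[|[|[|[|//]]]] ?] //= _;
  first [ by exists (ord4 0), (ord4 1) | by exists (ord4 0), (ord4 2)
        | by exists (ord4 0), (ord4 3) | by exists (ord4 1), (ord4 2)
        | by exists (ord4 1), (ord4 3) | by exists (ord4 2), (ord4 3) ].
Qed.

Lemma line_on_F5_pair_line L : line_on_F5 L -> exists i j k l b c,
  [/\ uniq [:: i; j; k; l], fermat_pair i j b, fermat_pair k l c & L = pair_line i j k l b c].
Proof.
case=> dL FL.
have [p [q [u [v [uL vL up uq [vp vq pq]]]]]] := line_coord_basis dL.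
have Lw := line_coord_decomp dL uL vL up uq vp vq.
have [r [s pqrs]] := exists_uniq4 pq.
have quintic t : sign5 p + sign5 q * t ^+ 5 + sign5 r * (hcoord r u + hcoord r v * t) ^+ 5
                 + sign5 s * (hcoord s u + hcoord s v * t) ^+ 5 = 0.
  have := FL (1 *: u + t *: v) (memvD (memvZ _ uL) (memvZ _ vL)).
  by rewrite (fermat5_uniq4 pqrs) !hcoord_comb up uq vp vq => <-; ring.
have L_eq i j k l b c : uniq [:: i; j; k; l] ->
    (forall x y, let w := x *: u + y *: v in
       hcoord j w = b * hcoord i w /\ hcoord l w = c * hcoord k w) ->
    L = pair_line i j k l b c.
  move=> ijkl rel; apply/eqP; rewrite eqEdim dim_pair_line // dL leqnn andbT.
  by apply/subvP => w wL; apply/pair_lineP => //; rewrite (Lw w wL); apply: rel.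
have [[ru0 [sv0 [ps qr]]] | [rv0 [su0 [pr qs]]]] :=
  four_fifth_powers_eq0 (sign5_neq0 p) (sign5_neq0 q) (sign5_neq0 r) (sign5_neq0 s) quintic.
- have qrps : uniq [:: q; r; p; s] by rewrite -(uniq_catCA [:: p] [:: q; r] [:: s]).
  exists q, r, p, s, (hcoord r v), (hcoord s u); split => //.
  by apply: L_eq => // x y w; rewrite /w !hcoord_comb up uq vp vq ru0 sv0; split; ring.
have prqs : uniq [:: p; r; q; s].
  by rewrite (uniq_catCA [:: p] [:: r] [:: q; s]) (uniq_catCA [:: r] [:: p; q] [:: s]).
exists p, r, q, s, (hcoord r u), (hcoord s v); split => //.
by apply: L_eq => // x y w; rewrite /w !hcoord_comb up uq vp vq rv0 su0; split; ring.
Qed.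

Lemma line_on_F5_key L : line_on_F5 L -> exists2 a, a \in allkeys & L = key_line a.
Proof.
case/line_on_F5_pair_line => [i [j [k [l [b [c [ijkl ijb klc ->]]]]]]].
exact: pair_line_key.
Qed.

Definition vec4 (x y z t : C) : 'rV[C]_4 := \row_m nth 0 [:: x; y; z; t] m.

Lemma vec4E x y z t : (cx (vec4 x y z t) = x) * (cy (vec4 x y z t) = y) *
  (cz (vec4 x y z t) = z) * (cw (vec4 x y z t) = t).
Proof. by rewrite /cx /cy /cz /cw !mxE. Qed.

Lemma vec4_neq0 x y z t : x != 0 -> vec4 x y z t != 0.
Proof. by apply: contra_neq => /(congr1 cx); rewrite /cx !mxE. Qed.

Lemma row4_eq0 w : cx w = 0 -> cy w = 0 -> cz w = 0 -> cw w = 0 -> w = 0.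
Proof. by move=> *; apply: (row4P (isT : uniq [:: ord4 0; ord4 1; ord4 2; ord4 3])); rewrite /hcoord mxE. Qed.

Lemma key_line0P i j w :
  reflect (cy w = zeta ^+ i * cx w /\ cw w = zeta ^+ j * cz w) (w \in key_line (0%N, i, j)).
Proof. by rewrite /key_line /= /pair_root /sign5 /= mulrN1 opprK !mul1r; apply: pair_lineP. Qed.

Lemma key_line1P i j w :
  reflect (cz w = zeta ^+ i * cx w /\ cw w = zeta ^+ j * cy w) (w \in key_line (1%N, i, j)).
Proof. by rewrite /key_line /= /pair_root /sign5 /= mulrN1 !opprK !mul1r; apply: pair_lineP. Qed.

Lemma key_line2P i j w :
  reflect (cw w = - zeta ^+ i * cx w /\ cz w = - zeta ^+ j * cy w) (w \in key_line (2%N, i, j)).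
Proof. by rewrite /key_line /= /pair_root /sign5 /= !mulrN1 !opprK !mulN1r; apply: pair_lineP. Qed.

Lemma key_lines01_disjoint i j k l :
  disjoint_lines (key_line (0%N, i, j)) (key_line (1%N, k, l)) <-> ~~ (i + l == j + k %[mod 5])%N.
Proof.
rewrite disjoint_linesP -(eq_prim_root_expr zeta_prim) !exprD; split => [disj | ne w].
  apply/eqP => e; move/negP: (vec4_neq0 (zeta ^+ i) (zeta ^+ k) (zeta ^+ l * zeta ^+ i) (oner_neq0 C)).
  apply; apply/eqP; apply: disj; [apply/key_line0P | apply/key_line1P]; rewrite !vec4E !mulr1 //.
  by rewrite mulrC e.
move=> /key_line0P [wy ww] /key_line1P [wz ww'].
have x0 : cx w = 0.
  by apply: (eq_mull_eq0 ne); transitivity (cw w); [rewrite ww' wy | rewrite ww wz]; ring.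
by apply: row4_eq0; rewrite ?ww ?wy ?wz x0 ?mulr0.
Qed.

Lemma key_lines02_disjoint i j k l :
  disjoint_lines (key_line (0%N, i, j)) (key_line (2%N, k, l)) <-> ~~ (k == i + j + l %[mod 5])%N.
Proof.
rewrite disjoint_linesP -(eq_prim_root_expr zeta_prim) !exprD; split => [disj | ne w].
  apply/eqP => e; move/negP: (vec4_neq0 (zeta ^+ i) (- (zeta ^+ l * zeta ^+ i)) (- zeta ^+ k) (oner_neq0 C)).
  apply; apply/eqP; apply: disj; [apply/key_line0P | apply/key_line2P]; rewrite !vec4E mulr1 //.
    by rewrite e; split=> //; ring.
  by rewrite mulNr.
move=> /key_line0P [wy ww] /key_line2P [ww' wz].
have x0 : cx w = 0.
  apply: (eq_mull_eq0 ne); apply: oppr_inj.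
  by transitivity (cw w); [rewrite ww' | rewrite ww wz wy]; ring.
by apply: row4_eq0; rewrite ?ww' ?wy ?wz ?wy x0 ?mulr0.
Qed.

Lemma key_lines12_disjoint i j k l :
  disjoint_lines (key_line (1%N, i, j)) (key_line (2%N, k, l)) <-> ~~ (k + l == i + j %[mod 5])%N.
Proof.
rewrite disjoint_linesP -(eq_prim_root_expr zeta_prim) !exprD; split => [disj | ne w].
  apply/eqP => e; move/negP: (vec4_neq0 (- zeta ^+ i) (zeta ^+ i * zeta ^+ l) (- (zeta ^+ i * zeta ^+ j))
                                        (zetaX_neq0 l)).
  apply; apply/eqP; apply: disj; [apply/key_line1P | apply/key_line2P]; rewrite !vec4E.
    by split; ring.
  by rewrite -e; split; ring.
move=> /key_line1P [wz ww] /key_line2P [ww' wz'].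
have ly : zeta ^+ l * cy w = - (zeta ^+ i * cx w) by rewrite -wz wz'; ring.
have x0 : cx w = 0.
  apply: (eq_mull_eq0 ne); apply: oppr_inj.
  transitivity (zeta ^+ l * cw w); first by rewrite ww'; ring.
  by rewrite ww mulrCA ly; ring.
have y0 : cy w = 0.
  by apply/eqP; rewrite -(mulrI_eq0 _ (lregP (zetaX_neq0 j))) -ww ww' x0 mulr0.
by apply: row4_eq0; rewrite ?ww' ?wz ?x0 ?y0 ?mulr0.
Qed.

Lemma pair_root_inj i j a a' :
  (a < 5)%N -> (a' < 5)%N -> (pair_root i j a == pair_root i j a') = (a == a').
Proof.
move=> a5 a'5; rewrite /pair_root (inj_eq (mulfI _)) ?mulf_neq0 ?oppr_eq0 ?sign5_neq0 //.
by rewrite (eq_prim_root_expr zeta_prim) !modn_small.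
Qed.

Lemma key_lines_same_disjoint t i j k l : [&& i < 5, j < 5, k < 5 & l < 5]%N ->
  disjoint_lines (key_line (t, i, j)) (key_line (t, k, l)) <-> ~~ ((i == k) || (j == l)).
Proof.
case/and4P => i5 j5 k5 l5; rewrite /key_line.
case: (key_matching t) (uniq_key_matching t) => [[m n] n'] u.
by rewrite pair_lines_disjoint // !pair_root_inj // negb_or.
Qed.

Definition key_meet (a b : key) : bool :=
  let: (t, i, j) := a in let: (u, k, l) := b in
  if t == u then (i == k) || (j == l)
  else if (t == 0) && (u == 1) then i + l == j + k %[mod 5]
  else if t == 0 then k == i + j + l %[mod 5]
  else k + l == i + j %[mod 5].

Definition key_adj (a b : key) : bool :=
  if (a.1.1 <= b.1.1)%N then key_meet a b else key_meet b a.

Lemma key_adjC a b : key_adj a b = key_adj b a.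
Proof.
case: a b => [[t i] j] [[u k] l]; rewrite /key_adj /=.
by case: (ltngtP t u) => // _; rewrite (eq_sym i) (eq_sym j).
Qed.

Lemma key_lines_disjoint a b : a \in allkeys -> b \in allkeys ->
  disjoint_lines (key_line a) (key_line b) <-> ~~ key_adj a b.
Proof.
wlog tu : a b / (a.1.1 <= b.1.1)%N.
  move=> IH aA bA; case: (leqP a.1.1 b.1.1) => [|/ltnW] tu; first exact: IH.
  by rewrite /disjoint_lines capvC key_adjC; apply: IH.
case: a b tu => [[t i] j] [[u k] l] tu; rewrite !mem_allkeys /key_adj tu.
case/and3P => t3 i5 j5 /and3P [u3 k5 l5].
have ijkl : [&& i < 5, j < 5, k < 5 & l < 5]%N by rewrite i5 j5 k5 l5.
case: t u t3 u3 tu => [|[|[|//]]] [|[|[|//]]] // _ _ _; rewrite /key_meet /=.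
- exact: key_lines_same_disjoint.
- exact: key_lines01_disjoint.
- exact: key_lines02_disjoint.
- exact: key_lines_same_disjoint.
- exact: key_lines12_disjoint.
- exact: key_lines_same_disjoint.
Qed.

Lemma key_family_on_F5 ks : uniq ks -> {subset ks <= allkeys} -> indep key_adj ks ->
  disjoint_family_on_F5 (map key_line ks).
Proof.
move=> uks sks iks.
have disj a b : a \in ks -> b \in ks -> a != b -> disjoint_lines (key_line a) (key_line b).
  by move=> aK bK ab; apply/key_lines_disjoint; rewrite ?sks //; exact: iks.
split.
- rewrite map_inj_in_uniq // => a b aK bK eab; apply/eqP/negPn/negP => ab.
  have := disj a b aK bK ab; rewrite /disjoint_lines eab capvv => b0.
  by have := (key_line_on_F5 b).1; rewrite /is_line b0 dimv0.
- by move=> _ /mapP [a _ ->]; exact: key_line_on_F5.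
- move=> _ _ /mapP [a aK ->] /mapP [b bK ->] kab; apply: disj => //.
  by apply: contra_neq kab => ->.
Qed.

Lemma family_keys s : disjoint_family_on_F5 s ->
  exists ks, [/\ s = map key_line ks, uniq ks, {subset ks <= allkeys} & indep key_adj ks].
Proof.
case=> us Fs Ds.
have [ks [eks sks]] : exists ks, s = map key_line ks /\ {subset ks <= allkeys}.
  elim: s {us Ds} Fs => [|L s IH] Fs; first by exists [::].
  have [|ks [-> sks]] := IH; first by move=> L' L's; apply: Fs; rewrite inE L's orbT.
  have [a aA ->] := line_on_F5_key (Fs L (mem_head _ _)).
  by exists (a :: ks); split => // x; rewrite inE => /orP [/eqP ->|/sks].
rewrite eks in us Ds; exists ks; split => //; first exact: map_uniq us.
move=> a b aK bK ab; apply/(key_lines_disjoint (sks _ aK) (sks _ bK)).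
apply: Ds; rewrite ?map_f //.
by apply: contra_neq ab; apply: (map_uniq_inj_in us).
Qed.

Lemma key_adj_block a b : a.1 = b.1 -> key_adj a b.
Proof. by case: a b => [[t i] j] [[u k] l] /= [-> ->]; rewrite /key_adj /key_meet leqnn !eqxx. Qed.

Lemma no_indep14 : ~~ has_indep key_adj (fun a : key => a.1) 75 allkeys 14.
Proof. by vm_compute. Qed.

Lemma indep_keys_le13 ks :
  uniq ks -> {subset ks <= allkeys} -> indep key_adj ks -> (size ks <= 13)%N.
Proof.
move=> uks sks iks.
by have := has_indepN_size_lt key_adj_block (isT : (size allkeys <= 75)%N) no_indep14 uks sks iks.
Qed.

Definition keys13 : seq key :=
  [:: (0, 0, 0); (0, 1, 1); (0, 2, 2); (0, 3, 4); (0, 4, 3);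
      (1, 0, 2); (1, 1, 3); (1, 2, 0); (1, 3, 1);
      (2, 1, 0); (2, 2, 4); (2, 3, 2); (2, 4, 1)]%N.

Theorem theorem3p6 :
  (exists s : seq {vspace 'rV[C]_4}, disjoint_family_on_F5 s /\ size s = 13%N) /\
  (forall s : seq {vspace 'rV[C]_4}, disjoint_family_on_F5 s -> (size s <= 13)%N).
Proof.
split.
  exists (map key_line keys13); split; last by rewrite size_map.
  by apply: key_family_on_F5; [| apply/allP | apply/indepP]; vm_compute.
move=> s /family_keys [ks [-> uks sks iks]]; rewrite size_map.
exact: indep_keys_le13.
Qed.
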